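(* Let $\lambda>0$, $D=\lambda\mathbb I_3$, and $G=\widetilde W_{1,0}(\cdot;D)\circ\mathbf P:S^3\to\mathbb R$. The critical points of $G$ are exactly: $(\pm1,0,0,0)$ (value $3(\lambda-1)^2$); all $(0,q_1,q_2,q_3)$ with $q_1^2+q_2^2+q_3^2=1$ (value $3\lambda^2+2\lambda+3$); and, if $\lambda>1$, all $\big(\pm\sqrt{\tfrac{\lambda+1}{2\lambda}},q_1,q_2,q_3\big)$ with $q_1^2+q_2^2+q_3^2=\tfrac{\lambda-1}{2\lambda}$ (value $(\lambda-1)^2$). Moreover: (i) The points $(0,q_1,q_2,q_3)$, $q_1^2+q_2^2+q_3^2=1$, are the global maxima of $G$; equivalently, the global maxima of $\widetilde W_{1,0}(\cdot;D)$ on $SO(3)$ are the rotations $2uu^T-\mathbb I_3$, $u\in\mathbb R^3$, $\|u\|=1$ (rotations by angle $\pi$). (ii) If $\lambda\le1$, $(\pm1,0,0,0)$ are the global minima of $G$, and $\mathbb I_3$ is the global minimum of $\widetilde W_{1,0}(\cdot;D)$. (iii) If $\lambda>1$, the points $\big(\pm\sqrt{\tfrac{\lambda+1}{2\lambda}},q_1,q_2,q_3\big)$ with $q_1^2+q_2^2+q_3^2=\tfrac{\lambda-1}{2\lambda}$ are exactly the global minima of $G$; equivalently, the global minima of $\widetilde W_{1,0}(\cdot;D)$ on $SO(3)$ are exactly the rotations $R$ with $\mathrm{tr}\,R=1+\frac2\lambda$ (rotations by angle $\arccos(1/\lambda)$ about an arbitrary axis).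
   Context: $\mathrm{sym}(Y)=\tfrac12(Y+Y^T)$, $\|Y\|^2=\mathrm{tr}(Y^TY)$. $\widetilde W_{1,0}(R;D)=\|\mathrm{sym}(R^TD-\mathbb I_3)\|^2$ for $R\in SO(3)$. $S^3\subset\mathbb R^4$ is the unit sphere and $\mathbf P:S^3\to SO(3)$ is $$\mathbf P(q)=\begin{pmatrix}(q^0)^2+(q^1)^2-(q^2)^2-(q^3)^2 & 2(q^1q^2-q^0q^3) & 2(q^1q^3+q^0q^2)\\ 2(q^1q^2+q^0q^3) & (q^0)^2-(q^1)^2+(q^2)^2-(q^3)^2 & 2(q^2q^3-q^0q^1)\\ 2(q^1q^3-q^0q^2) & 2(q^2q^3+q^0q^1) & (q^0)^2-(q^1)^2-(q^2)^2+(q^3)^2\end{pmatrix},$$ for $q=(q^0,q^1,q^2,q^3)\in S^3$. Critical points are those of $G$ as a function on the manifold $S^3$. *)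

From Stdlib Require Import Reals Lra.
Open Scope R_scope.

(* 3x3 real matrices as functions on indices 0,1,2 (entries outside are ignored). *)
Definition Mat3 := nat -> nat -> R.

Definition sum3 (f : nat -> R) : R := f 0%nat + f 1%nat + f 2%nat.
Definition mmul (A B : Mat3) : Mat3 := fun i j => sum3 (fun k => A i k * B k j).
Definition mtrans (A : Mat3) : Mat3 := fun i j => A j i.
Definition I3 : Mat3 := fun i j => if Nat.eqb i j then 1 else 0.
Definition madd (A B : Mat3) : Mat3 := fun i j => A i j + B i j.
Definition msub (A B : Mat3) : Mat3 := fun i j => A i j - B i j.
Definition mscale (c : R) (A : Mat3) : Mat3 := fun i j => c * A i j.
Definition mtrace (A : Mat3) : R := sum3 (fun i => A i i).
Definition msym (Y : Mat3) : Mat3 := mscale (1/2) (madd Y (mtrans Y)).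
Definition fnorm2 (Y : Mat3) : R := mtrace (mmul (mtrans Y) Y).
Definition det3 (A : Mat3) : R :=
  A 0%nat 0%nat * (A 1%nat 1%nat * A 2%nat 2%nat - A 1%nat 2%nat * A 2%nat 1%nat)
  - A 0%nat 1%nat * (A 1%nat 0%nat * A 2%nat 2%nat - A 1%nat 2%nat * A 2%nat 0%nat)
  + A 0%nat 2%nat * (A 1%nat 0%nat * A 2%nat 1%nat - A 1%nat 1%nat * A 2%nat 0%nat).
Definition mat_eq (A B : Mat3) : Prop :=
  forall i j : nat, (i < 3)%nat -> (j < 3)%nat -> A i j = B i j.
Definition in_SO3 (A : Mat3) : Prop := mat_eq (mmul (mtrans A) A) I3 /\ det3 A = 1.

Definition W10 (Rm D : Mat3) : R := fnorm2 (msym (msub (mmul (mtrans Rm) D) I3)).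

Record R4 := mkR4 { q0 : R; q1 : R; q2 : R; q3 : R }.
Definition dot4 (p q : R4) : R := q0 p * q0 q + q1 p * q1 q + q2 p * q2 q + q3 p * q3 q.
Definition add4 (p q : R4) : R4 := mkR4 (q0 p + q0 q) (q1 p + q1 q) (q2 p + q2 q) (q3 p + q3 q).
Definition scale4 (c : R) (p : R4) : R4 := mkR4 (c * q0 p) (c * q1 p) (c * q2 p) (c * q3 p).
Definition normalize4 (p : R4) : R4 := scale4 (/ sqrt (dot4 p p)) p.
Definition on_S3 (q : R4) : Prop := q0 q ^ 2 + q1 q ^ 2 + q2 q ^ 2 + q3 q ^ 2 = 1.

Definition Pmat (q : R4) : Mat3 := fun i j =>
  let a := q0 q in let b := q1 q in let c := q2 q in let d := q3 q in
  match i, j with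
  | 0%nat, 0%nat => a^2 + b^2 - c^2 - d^2
  | 0%nat, 1%nat => 2 * (b * c - a * d)
  | 0%nat, 2%nat => 2 * (b * d + a * c)
  | 1%nat, 0%nat => 2 * (b * c + a * d)
  | 1%nat, 1%nat => a^2 - b^2 + c^2 - d^2
  | 1%nat, 2%nat => 2 * (c * d - a * b)
  | 2%nat, 0%nat => 2 * (b * d - a * c)
  | 2%nat, 1%nat => 2 * (c * d + a * b)
  | 2%nat, 2%nat => a^2 - b^2 - c^2 + d^2
  | _, _ => 0
  end.

Definition Gfun (lam : R) (q : R4) : R := W10 (Pmat q) (mscale lam I3).

(* q in S^3 is a critical point of G (as a function on the manifold S^3):
   for every tangent vector v (v . q = 0), the derivative at t = 0 of G along
   the curve t |-> (q + t v)/|q + t v| in S^3 (which has velocity v at t = 0)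
   vanishes, i.e. dG_q = 0 on T_q S^3. *)
Definition critical_S3 (f : R4 -> R) (q : R4) : Prop :=
  on_S3 q /\
  forall v : R4, dot4 q v = 0 ->
    derivable_pt_lim (fun t => f (normalize4 (add4 q (scale4 t v)))) 0 0.

Definition is_gmax_S3 (f : R4 -> R) (q : R4) : Prop :=
  on_S3 q /\ forall p, on_S3 p -> f p <= f q.
Definition is_gmin_S3 (f : R4 -> R) (q : R4) : Prop :=
  on_S3 q /\ forall p, on_S3 p -> f q <= f p.
Definition is_gmax_SO3 (f : Mat3 -> R) (A : Mat3) : Prop :=
  in_SO3 A /\ forall B, in_SO3 B -> f B <= f A.
Definition is_gmin_SO3 (f : Mat3 -> R) (A : Mat3) : Prop :=
  in_SO3 A /\ forall B, in_SO3 B -> f A <= f B.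

Definition half_turn (u0 u1 u2 : R) : Mat3 := fun i j =>
  let u := fun k => match k with 0%nat => u0 | 1%nat => u1 | _ => u2 end in
  2 * u i * u j - I3 i j.

From Stdlib Require Import Reals Lra Lia Setoid.
From Coquelicot Require Import Coquelicot.
Open Scope R_scope.

(* Everything is governed by one quadratic "trace profile"
     profile lam t = lam^2 (t^2 - 2t + 3)/2 - 2 lam t + 3,
   whose argmax on [-1,3] is t = -1 and whose argmin on [-1,3] is t = 3 when lam <= 1
   and t = 1 + 2/lam when lam > 1.
   1. On S^3, G(q) = profile(tr P(q)) with tr P(q) = 4 q0^2 - 1, which sweeps [-1,3].
   2. P maps S^3 onto SO(3): the "Rodrigues matrix" K(R) built from the entries of a
      rotation R has rank one (its 2x2 minors vanish because R^{-1} = R^T = adj R), and a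
      factorization K = 4 q q^T gives a unit quaternion with P(q) = R.  Hence also
      W(R) = profile(tr R) on SO(3), tr R sweeps [-1,3], tr R = 3 iff R = I, and
      tr R = -1 iff R = P(0,u) = 2uu^T - I.
   3. A generic lemma turns "F = f o tau with tau onto an interval" into a description of
      the global extrema of F by the level sets of tau; applied on S^3 and on SO(3) this
      gives (i)-(iii).
   4. The derivative of G along the great circles through q is
      dprofile(tr P(q)) * 8 q0 v0, which gives the critical points. *)

Lemma square_zero (x : R) : x ^ 2 = 0 -> x = 0.
Proof. intros H. nra. Qed.

Lemma sqrt_sign_split (x k : R) : 0 <= k -> (x = sqrt k \/ x = - sqrt k) <-> x ^ 2 = k.
Proof.
  intros Hk. split.
  - intros [-> | ->]; [|replace ((- sqrt k) ^ 2) with (sqrt k ^ 2) by ring];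
      apply pow2_sqrt; exact Hk.
  - intros E. assert (F : (x - sqrt k) * (x + sqrt k) = 0).
    { transitivity (x ^ 2 - sqrt k ^ 2); [ring|]. rewrite pow2_sqrt, E by exact Hk. ring. }
    apply Rmult_integral in F as [F|F]; [left|right]; lra.
Qed.

Definition profile (lam t : R) : R := lam ^ 2 * (t ^ 2 - 2 * t + 3) / 2 - 2 * lam * t + 3.
Definition dprofile (lam t : R) : R := lam ^ 2 * (t - 1) - 2 * lam.
Definition tstar (lam : R) : R := 1 + 2 / lam.

Definition trace_range (t : R) : Prop := -1 <= t <= 3.

Definition strict_max_on (I : R -> Prop) (f : R -> R) (t0 : R) : Prop :=
  I t0 /\ forall t, I t -> f t <= f t0 /\ (f t0 <= f t -> t = t0).
Definition strict_min_on (I : R -> Prop) (f : R -> R) (t0 : R) : Prop :=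
  I t0 /\ forall t, I t -> f t0 <= f t /\ (f t <= f t0 -> t = t0).

Lemma profile_max (lam : R) : 0 < lam -> strict_max_on trace_range (profile lam) (-1).
Proof.
  intros Hl. split; [unfold trace_range; lra|]. intros t Ht. unfold trace_range in Ht.
  assert (E : profile lam (-1) - profile lam t = (1 + t) * (lam ^ 2 * (3 - t) / 2 + 2 * lam))
    by (unfold profile; field).
  assert (P : 0 < lam ^ 2 * (3 - t) / 2 + 2 * lam) by nra.
  split; [nra|]. intros Hle. nra.
Qed.

(* For lam <= 1 the vertex 1 + 2/lam lies right of 3, so the minimum is at t = 3. *)
Lemma profile_min_small (lam : R) :
  0 < lam -> lam <= 1 -> strict_min_on trace_range (profile lam) 3.
Proof.
  intros Hl Hl1. split; [unfold trace_range; lra|]. intros t Ht. unfold trace_range in Ht.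
  assert (E : profile lam t - profile lam 3 = (3 - t) * (lam * (4 - lam * (t + 1)) / 2))
    by (unfold profile; field).
  assert (P : 0 <= lam * (4 - lam * (t + 1)) / 2) by nra.
  split; [nra|]. intros Hle.
  destruct (Rlt_le_dec t 3) as [Ht3|Ht3]; [|lra].
  assert (lam * (t + 1) <= t + 1) by nra.
  assert (0 < lam * (4 - lam * (t + 1)) / 2) by nra. nra.
Qed.

(* For lam > 1 the vertex 1 + 2/lam lies inside [-1,3]. *)
Lemma profile_min_large (lam : R) :
  1 < lam -> strict_min_on trace_range (profile lam) (tstar lam).
Proof.
  intros Hl.
  assert (E : forall t, profile lam t - profile lam (tstar lam) = lam ^ 2 / 2 * (t - tstar lam) ^ 2)
    by (intros; unfold profile, tstar; field; lra).
  split.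
  - unfold trace_range, tstar. assert (0 < 2 / lam < 2); [|lra].
    split; [apply Rdiv_lt_0_compat; lra|].
    apply Rmult_lt_reg_r with lam; [lra|]. field_simplify; lra.
  - intros t _. specialize (E t).
    assert (Hc : 0 < lam ^ 2 / 2) by nra.
    assert (0 <= (t - tstar lam) ^ 2) by apply pow2_ge_0.
    split; [nra|]. intros Hle.
    assert (Z : (t - tstar lam) ^ 2 = 0) by nra. apply square_zero in Z. lra.
Qed.

Lemma dprofile_root (lam t : R) : 0 < lam -> dprofile lam t = 0 <-> t = tstar lam.
Proof.
  intros Hl. unfold dprofile, tstar. split; intros H.
  - apply Rmult_eq_reg_l with (lam ^ 2); [|nra]. field_simplify; [|lra]. lra.
  - subst t. field. lra.
Qed.

Section ExtremaThroughProfile.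
Variables (X : Type) (S : X -> Prop) (tau F : X -> R) (I : R -> Prop) (f : R -> R).
Hypothesis F_profile : forall x, S x -> F x = f (tau x).
Hypothesis tau_range : forall x, S x -> I (tau x).
Hypothesis tau_onto : forall t, I t -> exists x, S x /\ tau x = t.

Lemma argmax_through_profile (t0 : R) : strict_max_on I f t0 ->
  forall x, (S x /\ forall y, S y -> F y <= F x) <-> (S x /\ tau x = t0).
Proof.
  intros [It0 Hmax] x. split.
  - intros [Sx Hx]. split; [exact Sx|].
    destruct (tau_onto t0 It0) as [y [Sy Ey]].
    apply (Hmax _ (tau_range x Sx)). rewrite <- Ey, <- !F_profile by assumption. now apply Hx.
  - intros [Sx Ex]. split; [exact Sx|]. intros y Sy.
    rewrite !F_profile, Ex by assumption. apply (Hmax _ (tau_range y Sy)).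
Qed.

Lemma argmin_through_profile (t0 : R) : strict_min_on I f t0 ->
  forall x, (S x /\ forall y, S y -> F x <= F y) <-> (S x /\ tau x = t0).
Proof.
  intros [It0 Hmin] x. split.
  - intros [Sx Hx]. split; [exact Sx|].
    destruct (tau_onto t0 It0) as [y [Sy Ey]].
    apply (Hmin _ (tau_range x Sx)). rewrite <- Ey, <- !F_profile by assumption. now apply Hx.
  - intros [Sx Ex]. split; [exact Sx|]. intros y Sy.
    rewrite !F_profile, Ex by assumption. apply (Hmin _ (tau_range y Sy)).
Qed.

End ExtremaThroughProfile.

Lemma mat_eq_refl (A : Mat3) : mat_eq A A.
Proof. now intros i j _ _. Qed.

Lemma mat_eq_sym (A B : Mat3) : mat_eq A B -> mat_eq B A.
Proof. intros H i j Hi Hj. now rewrite H. Qed.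

Lemma mat_eq_trans (A B C : Mat3) : mat_eq A B -> mat_eq B C -> mat_eq A C.
Proof. intros H1 H2 i j Hi Hj. now rewrite H1, H2. Qed.

Add Relation Mat3 mat_eq
  reflexivity proved by mat_eq_refl
  symmetry proved by mat_eq_sym
  transitivity proved by mat_eq_trans as mat_eq_rel.

Add Morphism mmul with signature mat_eq ==> mat_eq ==> mat_eq as mmul_mat_eq.
Proof.
  intros A A' HA B B' HB i j Hi Hj. unfold mmul, sum3. rewrite !HA, !HB by lia. reflexivity.
Qed.

Add Morphism mtrans with signature mat_eq ==> mat_eq as mtrans_mat_eq.
Proof. intros A A' HA i j Hi Hj. unfold mtrans. now apply HA. Qed.

Lemma mtrace_mat_eq (A B : Mat3) : mat_eq A B -> mtrace A = mtrace B.
Proof. intros H. unfold mtrace, sum3. rewrite !H by lia. reflexivity. Qed.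

Lemma det3_mat_eq (A B : Mat3) : mat_eq A B -> det3 A = det3 B.
Proof. intros H. unfold det3. rewrite !H by lia. reflexivity. Qed.

Lemma W10_mat_eq (A B D : Mat3) : mat_eq A B -> W10 A D = W10 B D.
Proof.
  intros H. unfold W10, fnorm2, msym, msub, mmul, mtrans, mscale, madd, mtrace, sum3.
  rewrite !H by lia. reflexivity.
Qed.

Lemma in_SO3_mat_eq (A B : Mat3) : mat_eq A B -> in_SO3 A -> in_SO3 B.
Proof.
  intros H [Horth Hdet]. split.
  - rewrite <- H. exact Horth.
  - rewrite <- (det3_mat_eq _ _ H). exact Hdet.
Qed.

Ltac index_cases i := destruct i as [|[|[|i]]]; try lia.

Lemma mmul_assoc (A B C : Mat3) : mat_eq (mmul (mmul A B) C) (mmul A (mmul B C)).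
Proof. intros i j _ _. unfold mmul, sum3. ring. Qed.

Lemma mmul_I3_l (A : Mat3) : mat_eq (mmul I3 A) A.
Proof. intros i j Hi _. index_cases i; unfold mmul, sum3, I3; simpl; ring. Qed.

Lemma mmul_I3_r (A : Mat3) : mat_eq (mmul A I3) A.
Proof. intros i j _ Hj. index_cases j; unfold mmul, sum3, I3; simpl; ring. Qed.

Lemma mat_eq_entries (A B : Mat3) : mat_eq A B ->
  A 0%nat 0%nat = B 0%nat 0%nat /\ A 0%nat 1%nat = B 0%nat 1%nat /\ A 0%nat 2%nat = B 0%nat 2%nat /\
  A 1%nat 0%nat = B 1%nat 0%nat /\ A 1%nat 1%nat = B 1%nat 1%nat /\ A 1%nat 2%nat = B 1%nat 2%nat /\
  A 2%nat 0%nat = B 2%nat 0%nat /\ A 2%nat 1%nat = B 2%nat 1%nat /\ A 2%nat 2%nat = B 2%nat 2%nat.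
Proof. intros H. repeat split; apply H; lia. Qed.

Definition adj3 (A : Mat3) : Mat3 := fun i j =>
  let m k l := A k l in
  match i, j with
  | 0%nat, 0%nat => m 1%nat 1%nat * m 2%nat 2%nat - m 1%nat 2%nat * m 2%nat 1%nat
  | 0%nat, 1%nat => m 0%nat 2%nat * m 2%nat 1%nat - m 0%nat 1%nat * m 2%nat 2%nat
  | 0%nat, 2%nat => m 0%nat 1%nat * m 1%nat 2%nat - m 0%nat 2%nat * m 1%nat 1%nat
  | 1%nat, 0%nat => m 1%nat 2%nat * m 2%nat 0%nat - m 1%nat 0%nat * m 2%nat 2%nat
  | 1%nat, 1%nat => m 0%nat 0%nat * m 2%nat 2%nat - m 0%nat 2%nat * m 2%nat 0%nat
  | 1%nat, 2%nat => m 0%nat 2%nat * m 1%nat 0%nat - m 0%nat 0%nat * m 1%nat 2%nat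
  | 2%nat, 0%nat => m 1%nat 0%nat * m 2%nat 1%nat - m 1%nat 1%nat * m 2%nat 0%nat
  | 2%nat, 1%nat => m 0%nat 1%nat * m 2%nat 0%nat - m 0%nat 0%nat * m 2%nat 1%nat
  | 2%nat, 2%nat => m 0%nat 0%nat * m 1%nat 1%nat - m 0%nat 1%nat * m 1%nat 0%nat
  | _, _ => 0
  end.

Lemma mmul_adj3 (A : Mat3) : mat_eq (mmul A (adj3 A)) (mscale (det3 A) I3).
Proof.
  intros i j Hi Hj. index_cases i; index_cases j;
    unfold mmul, sum3, adj3, mscale, I3, det3; simpl; ring.
Qed.

(* For a rotation the left inverse M^T is also the right inverse adj(M):
   M^T = M^T (M adj M) = (M^T M) adj M = adj M. *)
Lemma SO3_adj3 (M : Mat3) : in_SO3 M -> mat_eq (adj3 M) (mtrans M).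
Proof.
  intros [Horth Hdet].
  assert (Hinv : mat_eq (mmul M (adj3 M)) I3).
  { rewrite mmul_adj3, Hdet. intros i j _ _. unfold mscale. ring. }
  rewrite <- (mmul_I3_l (adj3 M)), <- Horth, mmul_assoc, Hinv. apply mmul_I3_r.
Qed.

Lemma SO3_rows (M : Mat3) : in_SO3 M -> mat_eq (mmul M (mtrans M)) I3.
Proof.
  intros HM. rewrite <- (SO3_adj3 M HM), mmul_adj3, (proj2 HM).
  intros i j _ _. unfold mscale. ring.
Qed.

Lemma Pmat_orth (q : R4) : mat_eq (mmul (mtrans (Pmat q)) (Pmat q)) (mscale (dot4 q q ^ 2) I3).
Proof.
  intros i j Hi Hj. destruct q as [a b c d]. index_cases i; index_cases j;
    unfold mmul, mtrans, sum3, mscale, I3, Pmat, dot4; simpl; ring.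
Qed.

Lemma Pmat_det (q : R4) : det3 (Pmat q) = dot4 q q ^ 3.
Proof. destruct q as [a b c d]. unfold det3, Pmat, dot4; simpl; ring. Qed.

Lemma on_S3_dot (q : R4) : on_S3 q <-> dot4 q q = 1.
Proof. destruct q as [a b c d]. unfold on_S3, dot4; simpl. split; intros; lra. Qed.

Lemma Pmat_SO3 (q : R4) : on_S3 q -> in_SO3 (Pmat q).
Proof.
  intros Hq. apply on_S3_dot in Hq. split.
  - rewrite Pmat_orth, Hq. intros i j _ _. unfold mscale. ring.
  - rewrite Pmat_det, Hq. ring.
Qed.

(* The trace of P(q) on S^3, which is the variable of the profile. *)
Definition qtrace (q : R4) : R := 4 * q0 q ^ 2 - 1.

Lemma Pmat_trace (q : R4) : on_S3 q -> mtrace (Pmat q) = qtrace q.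
Proof. destruct q as [a b c d]. unfold on_S3, mtrace, sum3, Pmat, qtrace; simpl. intros; lra. Qed.

Lemma qtrace_range (q : R4) : on_S3 q -> trace_range (qtrace q).
Proof. destruct q as [a b c d]. unfold on_S3, trace_range, qtrace; simpl. intros; nra. Qed.

Lemma qtrace_onto (t : R) : trace_range t -> exists q, on_S3 q /\ qtrace q = t.
Proof.
  unfold trace_range. intros Ht.
  exists (mkR4 (sqrt ((1 + t) / 4)) (sqrt ((3 - t) / 4)) 0 0).
  unfold on_S3, qtrace; cbn [q0 q1 q2 q3]. rewrite !pow2_sqrt by lra. split; field.
Qed.

(* The symmetric 4x4 matrix K(M) which equals 4 q q^T when M = P(q) with |q| = 1. *)
Definition Kmat (A : Mat3) : nat -> nat -> R := fun i j =>
  let a := A 0%nat 0%nat in let b := A 0%nat 1%nat in let c := A 0%nat 2%nat in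
  let d := A 1%nat 0%nat in let e := A 1%nat 1%nat in let f := A 1%nat 2%nat in
  let g := A 2%nat 0%nat in let h := A 2%nat 1%nat in let k := A 2%nat 2%nat in
  match i, j with
  | 0%nat, 0%nat => 1 + a + e + k
  | 1%nat, 1%nat => 1 + a - e - k
  | 2%nat, 2%nat => 1 - a + e - k
  | 3%nat, 3%nat => 1 - a - e + k
  | 0%nat, 1%nat | 1%nat, 0%nat => h - f
  | 0%nat, 2%nat | 2%nat, 0%nat => c - g
  | 0%nat, 3%nat | 3%nat, 0%nat => d - b
  | 1%nat, 2%nat | 2%nat, 1%nat => b + d
  | 1%nat, 3%nat | 3%nat, 1%nat => c + g
  | 2%nat, 3%nat | 3%nat, 2%nat => f + h
  | _, _ => 0
  end.

(* For a rotation, K has rank one: each 2x2 minor is a linear consequence of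
   M^T M = I, M M^T = I and adj M = M^T. *)
Lemma Kmat_rank_one (M : Mat3) : in_SO3 M ->
  forall m j l, Kmat M m m * Kmat M j l = Kmat M m j * Kmat M m l.
Proof.
  intros HM.
  pose proof (mat_eq_entries _ _ (proj1 HM)) as Hcols.
  pose proof (mat_eq_entries _ _ (SO3_rows M HM)) as Hrows.
  pose proof (mat_eq_entries _ _ (SO3_adj3 M HM)) as Hadj.
  unfold mmul, mtrans, sum3, I3, adj3 in Hcols, Hrows, Hadj; simpl in Hcols, Hrows, Hadj.
  intros m j l.
  destruct m as [|[|[|[|m]]]], j as [|[|[|[|j]]]], l as [|[|[|[|l]]]]; unfold Kmat; simpl;
    try ring; lra.
Qed.

Lemma rank_one_factor (K : nat -> nat -> R) (m : nat) : 0 < K m m ->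
  (forall j l, K m m * K j l = K m j * K m l) ->
  exists x : nat -> R, forall j l, 4 * x j * x l = K j l.
Proof.
  intros Hpos Hminor.
  assert (Hs : sqrt (K m m) * sqrt (K m m) = K m m) by (apply sqrt_sqrt; lra).
  assert (Hs0 : 0 < sqrt (K m m)) by (apply sqrt_lt_R0; lra).
  set (s := sqrt (K m m)) in *.
  exists (fun j => K m j / (2 * s)). intros j l.
  apply Rmult_eq_reg_l with (K m m); [|lra].
  rewrite Hminor, <- Hs. field. lra.
Qed.

(* Every rotation is P(q) for a unit quaternion q (tr K = 4, so some K m m > 0). *)
Lemma Pmat_onto (M : Mat3) : in_SO3 M -> exists q, on_S3 q /\ mat_eq M (Pmat q).
Proof.
  intros HM.
  assert (Htr : Kmat M 0 0 + Kmat M 1 1 + Kmat M 2 2 + Kmat M 3 3 = 4)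
    by (unfold Kmat; simpl; ring).
  assert (Hpos : exists m, 0 < Kmat M m m).
  { destruct (Rlt_le_dec 0 (Kmat M 0 0)); [now exists 0%nat|].
    destruct (Rlt_le_dec 0 (Kmat M 1 1)); [now exists 1%nat|].
    destruct (Rlt_le_dec 0 (Kmat M 2 2)); [now exists 2%nat|].
    exists 3%nat. lra. }
  destruct Hpos as [m Hm].
  destruct (rank_one_factor (Kmat M) m Hm (Kmat_rank_one M HM m)) as [x Hx].
  exists (mkR4 (x 0%nat) (x 1%nat) (x 2%nat) (x 3%nat)).
  (* the ten products x_j x_l, j <= l, determine both |q|^2 and every entry of P(q) *)
  pose proof (Hx 0%nat 0%nat). pose proof (Hx 1%nat 1%nat).
  pose proof (Hx 2%nat 2%nat). pose proof (Hx 3%nat 3%nat).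
  pose proof (Hx 0%nat 1%nat). pose proof (Hx 0%nat 2%nat). pose proof (Hx 0%nat 3%nat).
  pose proof (Hx 1%nat 2%nat). pose proof (Hx 1%nat 3%nat). pose proof (Hx 2%nat 3%nat).
  unfold Kmat in *; simpl in *. split.
  - unfold on_S3; simpl. lra.
  - intros i j Hi Hj. index_cases i; index_cases j; unfold Pmat; simpl; lra.
Qed.

Lemma Gfun_quartic (lam : R) (q : R4) :
  let n := dot4 q q in let t := mtrace (Pmat q) in
  Gfun lam q = lam ^ 2 * (3 * n ^ 2 + t ^ 2 - 2 * n * t) / 2 - 2 * lam * t + 3.
Proof.
  destruct q as [a b c d].
  unfold Gfun, W10, fnorm2, msym, msub, mmul, mtrans, mscale, madd, mtrace, sum3, I3, Pmat, dot4.
  simpl. field.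
Qed.

Lemma Gfun_on_S3 (lam : R) (q : R4) : on_S3 q -> Gfun lam q = profile lam (qtrace q).
Proof.
  intros Hq. rewrite Gfun_quartic. cbv zeta.
  rewrite (proj1 (on_S3_dot q) Hq), Pmat_trace by exact Hq. unfold profile. field.
Qed.

Lemma W_on_SO3 (lam : R) (M : Mat3) : in_SO3 M -> W10 M (mscale lam I3) = profile lam (mtrace M).
Proof.
  intros HM. destruct (Pmat_onto M HM) as [q [Hq E]].
  rewrite (W10_mat_eq _ _ _ E), (mtrace_mat_eq _ _ E), Pmat_trace by exact Hq.
  exact (Gfun_on_S3 lam q Hq).
Qed.

Lemma mtrace_SO3_range (M : Mat3) : in_SO3 M -> trace_range (mtrace M).
Proof.
  intros HM. destruct (Pmat_onto M HM) as [q [Hq E]].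
  rewrite (mtrace_mat_eq _ _ E), Pmat_trace by exact Hq. exact (qtrace_range q Hq).
Qed.

Lemma mtrace_SO3_onto (t : R) : trace_range t -> exists M, in_SO3 M /\ mtrace M = t.
Proof.
  intros Ht. destruct (qtrace_onto t Ht) as [q [Hq E]].
  exists (Pmat q). split; [exact (Pmat_SO3 q Hq)|]. rewrite Pmat_trace; assumption.
Qed.

Lemma dot4_line (q v : R4) (t : R) :
  dot4 (add4 q (scale4 t v)) (add4 q (scale4 t v)) = dot4 q q + 2 * t * dot4 q v + t ^ 2 * dot4 v v.
Proof. destruct q as [a b c d], v as [x y z u]. unfold dot4, add4, scale4; simpl. ring. Qed.

Lemma normalize4_on_S3 (p : R4) : 0 < dot4 p p -> on_S3 (normalize4 p).
Proof.
  intros Hp. apply on_S3_dot.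
  assert (Hs : sqrt (dot4 p p) * sqrt (dot4 p p) = dot4 p p) by (apply sqrt_sqrt; lra).
  assert (Hs0 : 0 < sqrt (dot4 p p)) by (apply sqrt_lt_R0; lra).
  transitivity (dot4 p p / (sqrt (dot4 p p) * sqrt (dot4 p p))).
  - destruct p as [a b c d]. unfold normalize4, scale4, dot4 in *; simpl in *. field. lra.
  - rewrite Hs. field. lra.
Qed.

Lemma deriv_Gfun_along (lam : R) (q v : R4) : on_S3 q -> dot4 q v = 0 ->
  derivable_pt_lim (fun t => Gfun lam (normalize4 (add4 q (scale4 t v)))) 0
    (dprofile lam (qtrace q) * (8 * q0 q * q0 v)).
Proof.
  intros Hq Hv. apply is_derive_Reals.
  set (w := dot4 v v).
  assert (Hw : 0 <= w) by (destruct v as [x y z u]; unfold w, dot4; simpl; nra).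
  assert (Hn : forall t, dot4 (add4 q (scale4 t v)) (add4 q (scale4 t v)) = 1 + t ^ 2 * w).
  { intros t. rewrite dot4_line, (proj1 (on_S3_dot q) Hq), Hv. unfold w. ring. }
  apply is_derive_ext with
    (f := fun t => profile lam (4 * (/ sqrt (1 + t ^ 2 * w) * (q0 q + t * q0 v)) ^ 2 - 1)).
  { intros t. rewrite Gfun_on_S3.
    - unfold normalize4, qtrace. rewrite Hn. reflexivity.
    - apply normalize4_on_S3. rewrite Hn. nra. }
  unfold profile, dprofile, qtrace. auto_derive;
    replace (1 + 0 * (0 * 1) * w) with 1 by ring; rewrite sqrt_1.
  - repeat split; lra.
  - field.
Qed.

(* q is critical iff dprofile(tr P(q)) q0 = 0, or q is a pole (where every tangent v has
   v0 = 0); away from the poles a tangent vector with v0 <> 0 exists. *)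
Lemma critical_S3_char (lam : R) (q : R4) : critical_S3 (Gfun lam) q <->
  on_S3 q /\ (dprofile lam (qtrace q) * q0 q = 0 \/ (q1 q = 0 /\ q2 q = 0 /\ q3 q = 0)).
Proof.
  split.
  - intros [Hq Hd]. split; [exact Hq|].
    assert (Htan : forall v, dot4 q v = 0 -> q0 v <> 0 -> dprofile lam (qtrace q) * q0 q = 0).
    { intros v Hv Hv0.
      pose proof (uniqueness_limite _ _ _ _ (Hd v Hv) (deriv_Gfun_along lam q v Hq Hv)) as U.
      assert (Z : dprofile lam (qtrace q) * q0 q * (8 * q0 v) = 0) by lra.
      apply Rmult_integral in Z as [Z|Z]; [exact Z|lra]. }
    destruct (Req_dec (q1 q) 0) as [B|B].
    2:{ left. apply (Htan (mkR4 (q1 q) (- q0 q) 0 0)); unfold dot4; simpl; [ring|exact B]. }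
    destruct (Req_dec (q2 q) 0) as [C|C].
    2:{ left. apply (Htan (mkR4 (q2 q) 0 (- q0 q) 0)); unfold dot4; simpl; [ring|exact C]. }
    destruct (Req_dec (q3 q) 0) as [D|D].
    2:{ left. apply (Htan (mkR4 (q3 q) 0 0 (- q0 q))); unfold dot4; simpl; [ring|exact D]. }
    right; auto.
  - intros [Hq Hcrit]. split; [exact Hq|]. intros v Hv.
    replace 0 with (dprofile lam (qtrace q) * (8 * q0 q * q0 v)) at 2.
    { now apply deriv_Gfun_along. }
    destruct Hcrit as [Z|(B & C & D)].
    + transitivity (dprofile lam (qtrace q) * q0 q * (8 * q0 v)); [ring|]. rewrite Z. ring.
    + unfold dot4 in Hv. rewrite B, C, D in Hv.
      assert (Z : q0 q * q0 v = 0) by lra.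
      transitivity (8 * dprofile lam (qtrace q) * (q0 q * q0 v)); [ring|]. rewrite Z. ring.
Qed.

Lemma S3_poles (q : R4) : on_S3 q /\ q0 q ^ 2 = 1 <-> q = mkR4 1 0 0 0 \/ q = mkR4 (-1) 0 0 0.
Proof.
  destruct q as [a b c d]. unfold on_S3; cbn [q0 q1 q2 q3]. split.
  - intros [Hs Ha].
    assert (b ^ 2 = 0 /\ c ^ 2 = 0 /\ d ^ 2 = 0) as (B & C & D) by (repeat split; nra).
    apply square_zero in B, C, D. subst b c d.
    assert (Hpm : a = sqrt 1 \/ a = - sqrt 1) by (apply sqrt_sign_split; lra).
    rewrite sqrt_1 in Hpm. destruct Hpm as [-> | ->]; [left|right]; reflexivity.
  - intros [E|E]; injection E as -> -> -> ->; split; ring.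
Qed.

Lemma qtrace_tstar (lam : R) (q : R4) : 0 < lam ->
  qtrace q = tstar lam <-> q0 q ^ 2 = (lam + 1) / (2 * lam).
Proof.
  intros Hl. unfold qtrace, tstar. split; intros E.
  - replace (q0 q ^ 2) with ((1 + 2 / lam + 1) / 4) by lra. field. lra.
  - rewrite E. field. lra.
Qed.

Lemma critical_S3_levels (lam : R) (q : R4) : 0 < lam -> critical_S3 (Gfun lam) q <->
  on_S3 q /\ (q0 q = 0 \/ q0 q ^ 2 = (lam + 1) / (2 * lam) \/ q0 q ^ 2 = 1).
Proof.
  intros Hl. rewrite critical_S3_char, <- (qtrace_tstar lam q Hl), <- (dprofile_root _ _ Hl).
  split; intros [Hq Hc]; split; try exact Hq.
  - destruct Hc as [Z|(B & C & D)].
    + apply Rmult_integral in Z as [Z|Z]; [right; left|left]; exact Z.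
    + right; right. unfold on_S3 in Hq. rewrite B, C, D in Hq. lra.
  - destruct Hc as [Z|[Z|Z]].
    + left. rewrite Z. ring.
    + left. rewrite Z. ring.
    + right. destruct (proj1 (S3_poles q) (conj Hq Z)) as [-> | ->]; cbn; auto.
Qed.

(* The middle level is a genuine (non-polar) level of S^3 only when lam > 1. *)
Lemma critical_points (lam : R) (q : R4) : 0 < lam ->
  critical_S3 (Gfun lam) q <->
  (q = mkR4 1 0 0 0 \/ q = mkR4 (-1) 0 0 0
   \/ (q0 q = 0 /\ q1 q ^ 2 + q2 q ^ 2 + q3 q ^ 2 = 1)
   \/ (1 < lam /\
       (q0 q = sqrt ((lam + 1) / (2 * lam)) \/ q0 q = - sqrt ((lam + 1) / (2 * lam))) /\
       q1 q ^ 2 + q2 q ^ 2 + q3 q ^ 2 = (lam - 1) / (2 * lam))).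
Proof.
  intros Hl. rewrite critical_S3_levels by exact Hl.
  assert (Hk : 0 <= (lam + 1) / (2 * lam)) by (apply Rle_mult_inv_pos; lra).
  assert (Hrest : (lam - 1) / (2 * lam) = 1 - (lam + 1) / (2 * lam)) by (field; lra).
  rewrite sqrt_sign_split, Hrest by exact Hk. unfold on_S3.
  split.
  - intros [Hq [Z|[Z|Z]]].
    + right; right; left. split; [exact Z|]. rewrite Z in Hq. lra.
    + destruct (Rlt_le_dec 1 lam) as [Hl1|Hl1].
      * right; right; right. repeat split; lra.
      * assert (Hk1 : 1 <= (lam + 1) / (2 * lam))
          by (apply Rmult_le_reg_r with (2 * lam); [lra|]; field_simplify; lra).
        assert (Z1 : q0 q ^ 2 = 1) by nra.
        destruct (proj1 (S3_poles q) (conj Hq Z1)); auto.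
    + destruct (proj1 (S3_poles q) (conj Hq Z)); auto.
  - intros [E|[E|[[Z Hq]|(Hl1 & Z & Hq)]]].
    + pose proof (proj2 (S3_poles q) (or_introl E)) as [Hq Z]. auto.
    + pose proof (proj2 (S3_poles q) (or_intror E)) as [Hq Z]. auto.
    + split; [|left; exact Z]. rewrite Z. lra.
    + split; [lra|right; left; exact Z].
Qed.

Lemma critical_values (lam : R) : 0 < lam ->
  Gfun lam (mkR4 1 0 0 0) = 3 * (lam - 1) ^ 2 /\
  Gfun lam (mkR4 (-1) 0 0 0) = 3 * (lam - 1) ^ 2 /\
  (forall a b c : R, a ^ 2 + b ^ 2 + c ^ 2 = 1 ->
     Gfun lam (mkR4 0 a b c) = 3 * lam ^ 2 + 2 * lam + 3) /\
  (1 < lam -> forall a b c : R, a ^ 2 + b ^ 2 + c ^ 2 = (lam - 1) / (2 * lam) ->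
     Gfun lam (mkR4 (sqrt ((lam + 1) / (2 * lam))) a b c) = (lam - 1) ^ 2 /\
     Gfun lam (mkR4 (- sqrt ((lam + 1) / (2 * lam))) a b c) = (lam - 1) ^ 2).
Proof.
  intros Hl.
  assert (Hpole : forall s, s ^ 2 = 1 -> Gfun lam (mkR4 s 0 0 0) = 3 * (lam - 1) ^ 2).
  { intros s Hs. rewrite Gfun_on_S3 by (unfold on_S3; cbn [q0 q1 q2 q3]; lra).
    unfold qtrace, profile; cbn [q0]. rewrite Hs. field. }
  split; [apply Hpole; ring|]. split; [apply Hpole; ring|]. split.
  - intros a b c Habc. rewrite Gfun_on_S3 by (unfold on_S3; cbn [q0 q1 q2 q3]; lra).
    unfold qtrace, profile; cbn [q0]. field.
  - intros Hl1 a b c Habc.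
    assert (Hk : 0 <= (lam + 1) / (2 * lam)) by (apply Rle_mult_inv_pos; lra).
    assert (Hrest : (lam - 1) / (2 * lam) = 1 - (lam + 1) / (2 * lam)) by (field; lra).
    assert (Hmin : forall s, s ^ 2 = (lam + 1) / (2 * lam) -> Gfun lam (mkR4 s a b c) = (lam - 1) ^ 2).
    { intros s Hs.
      assert (Hq : on_S3 (mkR4 s a b c)) by (unfold on_S3; cbn [q0 q1 q2 q3]; lra).
      rewrite Gfun_on_S3, (proj2 (qtrace_tstar lam (mkR4 s a b c) Hl) Hs) by exact Hq.
      unfold profile, tstar. field. lra. }
    split; apply Hmin, sqrt_sign_split; auto.
Qed.

Lemma gmax_S3 (lam : R) (q : R4) : 0 < lam -> is_gmax_S3 (Gfun lam) q <-> on_S3 q /\ q0 q = 0.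
Proof.
  intros Hl. unfold is_gmax_S3.
  rewrite (argmax_through_profile R4 on_S3 qtrace (Gfun lam) trace_range (profile lam)
             (Gfun_on_S3 lam) qtrace_range qtrace_onto (-1) (profile_max lam Hl)).
  unfold qtrace. split; intros [Hq Z]; split; auto.
  - apply square_zero. lra.
  - rewrite Z. ring.
Qed.

Lemma gmin_S3_small (lam : R) (q : R4) : 0 < lam -> lam <= 1 ->
  is_gmin_S3 (Gfun lam) q <-> q = mkR4 1 0 0 0 \/ q = mkR4 (-1) 0 0 0.
Proof.
  intros Hl Hl1. unfold is_gmin_S3.
  rewrite (argmin_through_profile R4 on_S3 qtrace (Gfun lam) trace_range (profile lam)
             (Gfun_on_S3 lam) qtrace_range qtrace_onto 3 (profile_min_small lam Hl Hl1)).
  rewrite <- S3_poles. unfold qtrace. split; intros [Hq Z]; split; auto; lra.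
Qed.

Lemma gmin_S3_large (lam : R) (q : R4) : 1 < lam ->
  is_gmin_S3 (Gfun lam) q <->
  ((q0 q = sqrt ((lam + 1) / (2 * lam)) \/ q0 q = - sqrt ((lam + 1) / (2 * lam))) /\
   q1 q ^ 2 + q2 q ^ 2 + q3 q ^ 2 = (lam - 1) / (2 * lam)).
Proof.
  intros Hl. unfold is_gmin_S3.
  rewrite (argmin_through_profile R4 on_S3 qtrace (Gfun lam) trace_range (profile lam)
             (Gfun_on_S3 lam) qtrace_range qtrace_onto _ (profile_min_large lam Hl)).
  assert (Hk : 0 <= (lam + 1) / (2 * lam)) by (apply Rle_mult_inv_pos; lra).
  assert (Hrest : (lam - 1) / (2 * lam) = 1 - (lam + 1) / (2 * lam)) by (field; lra).
  rewrite qtrace_tstar, sqrt_sign_split, Hrest by lra.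
  unfold on_S3. split; intros [Hq Z]; split; lra.
Qed.

Lemma half_turn_Pmat (u0 u1 u2 : R) : u0 ^ 2 + u1 ^ 2 + u2 ^ 2 = 1 ->
  mat_eq (half_turn u0 u1 u2) (Pmat (mkR4 0 u0 u1 u2)).
Proof. intros Hu i j Hi Hj. index_cases i; index_cases j; unfold half_turn, Pmat, I3; simpl; lra. Qed.

Lemma Pmat_pole (q : R4) : on_S3 q -> q0 q ^ 2 = 1 -> mat_eq (Pmat q) I3.
Proof.
  intros Hq Z. destruct (proj1 (S3_poles q) (conj Hq Z)) as [-> | ->];
    intros i j Hi Hj; index_cases i; index_cases j; unfold Pmat, I3; simpl; ring.
Qed.

Lemma SO3_half_turns (M : Mat3) : in_SO3 M /\ mtrace M = -1 <->
  exists u0 u1 u2 : R, u0 ^ 2 + u1 ^ 2 + u2 ^ 2 = 1 /\ mat_eq M (half_turn u0 u1 u2).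
Proof.
  split.
  - intros [HM Ht]. destruct (Pmat_onto M HM) as [[a b c d] [Hq E]].
    rewrite (mtrace_mat_eq _ _ E), Pmat_trace in Ht by exact Hq.
    unfold qtrace, on_S3 in *; cbn [q0 q1 q2 q3] in *.
    assert (Ha : a = 0) by (apply square_zero; lra). subst a.
    exists b, c, d. split; [lra|]. rewrite E. symmetry. apply half_turn_Pmat. lra.
  - intros (u0 & u1 & u2 & Hu & E). rewrite half_turn_Pmat in E by exact Hu.
    assert (Hq : on_S3 (mkR4 0 u0 u1 u2)) by (unfold on_S3; cbn [q0 q1 q2 q3]; lra).
    split; [exact (in_SO3_mat_eq _ _ (symmetry E) (Pmat_SO3 _ Hq))|].
    rewrite (mtrace_mat_eq _ _ E), Pmat_trace by exact Hq. unfold qtrace; cbn [q0]. ring.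
Qed.

Lemma SO3_identity (M : Mat3) : in_SO3 M /\ mtrace M = 3 <-> mat_eq M I3.
Proof.
  split.
  - intros [HM Ht]. destruct (Pmat_onto M HM) as [q [Hq E]].
    rewrite (mtrace_mat_eq _ _ E), Pmat_trace in Ht by exact Hq. unfold qtrace in Ht.
    rewrite E. apply Pmat_pole; [exact Hq|lra].
  - intros E.
    assert (Hq : on_S3 (mkR4 1 0 0 0)) by (unfold on_S3; cbn [q0 q1 q2 q3]; ring).
    assert (E1 : mat_eq M (Pmat (mkR4 1 0 0 0)))
      by (rewrite E; symmetry; apply Pmat_pole; [exact Hq|simpl; ring]).
    split; [exact (in_SO3_mat_eq _ _ (symmetry E1) (Pmat_SO3 _ Hq))|].
    rewrite (mtrace_mat_eq _ _ E1), Pmat_trace by exact Hq. unfold qtrace; cbn [q0]. ring.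
Qed.

Lemma gmax_SO3 (lam : R) (M : Mat3) : 0 < lam ->
  is_gmax_SO3 (fun Rm => W10 Rm (mscale lam I3)) M <->
  exists u0 u1 u2 : R, u0 ^ 2 + u1 ^ 2 + u2 ^ 2 = 1 /\ mat_eq M (half_turn u0 u1 u2).
Proof.
  intros Hl. unfold is_gmax_SO3. rewrite <- SO3_half_turns.
  exact (argmax_through_profile Mat3 in_SO3 mtrace _ trace_range (profile lam)
           (W_on_SO3 lam) mtrace_SO3_range mtrace_SO3_onto _ (profile_max lam Hl) M).
Qed.

Lemma gmin_SO3_small (lam : R) (M : Mat3) : 0 < lam -> lam <= 1 ->
  is_gmin_SO3 (fun Rm => W10 Rm (mscale lam I3)) M <-> mat_eq M I3.
Proof.
  intros Hl Hl1. unfold is_gmin_SO3. rewrite <- SO3_identity.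
  exact (argmin_through_profile Mat3 in_SO3 mtrace _ trace_range (profile lam)
           (W_on_SO3 lam) mtrace_SO3_range mtrace_SO3_onto _ (profile_min_small lam Hl Hl1) M).
Qed.

Lemma gmin_SO3_large (lam : R) (M : Mat3) : 1 < lam ->
  is_gmin_SO3 (fun Rm => W10 Rm (mscale lam I3)) M <-> in_SO3 M /\ mtrace M = 1 + 2 / lam.
Proof.
  intros Hl.
  exact (argmin_through_profile Mat3 in_SO3 mtrace _ trace_range (profile lam)
           (W_on_SO3 lam) mtrace_SO3_range mtrace_SO3_onto _ (profile_min_large lam Hl) M).
Qed.

Theorem mainTheorem12 (lam : R) (hlam : 0 < lam) :
  let D := mscale lam I3 in
  let G := Gfun lam in
  let W := fun Rm => W10 Rm D in
  (* classification of critical points *)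
  (forall q : R4,
     critical_S3 G q <->
     (q = mkR4 1 0 0 0 \/ q = mkR4 (-1) 0 0 0
      \/ (q0 q = 0 /\ q1 q ^ 2 + q2 q ^ 2 + q3 q ^ 2 = 1)
      \/ (1 < lam /\
          (q0 q = sqrt ((lam + 1) / (2 * lam)) \/ q0 q = - sqrt ((lam + 1) / (2 * lam))) /\
          q1 q ^ 2 + q2 q ^ 2 + q3 q ^ 2 = (lam - 1) / (2 * lam)))) /\
  (* critical values *)
  G (mkR4 1 0 0 0) = 3 * (lam - 1) ^ 2 /\
  G (mkR4 (-1) 0 0 0) = 3 * (lam - 1) ^ 2 /\
  (forall a b c : R, a ^ 2 + b ^ 2 + c ^ 2 = 1 ->
     G (mkR4 0 a b c) = 3 * lam ^ 2 + 2 * lam + 3) /\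
  (1 < lam -> forall a b c : R, a ^ 2 + b ^ 2 + c ^ 2 = (lam - 1) / (2 * lam) ->
     G (mkR4 (sqrt ((lam + 1) / (2 * lam))) a b c) = (lam - 1) ^ 2 /\
     G (mkR4 (- sqrt ((lam + 1) / (2 * lam))) a b c) = (lam - 1) ^ 2) /\
  (* (i) global maxima *)
  (forall q : R4, is_gmax_S3 G q <-> (on_S3 q /\ q0 q = 0)) /\
  (forall Rm : Mat3, is_gmax_SO3 W Rm <->
     exists u0 u1 u2 : R, u0 ^ 2 + u1 ^ 2 + u2 ^ 2 = 1 /\ mat_eq Rm (half_turn u0 u1 u2)) /\
  (* (ii) lambda <= 1 *)
  (lam <= 1 ->
     (forall q : R4, is_gmin_S3 G q <-> (q = mkR4 1 0 0 0 \/ q = mkR4 (-1) 0 0 0)) /\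
     (forall Rm : Mat3, is_gmin_SO3 W Rm <-> mat_eq Rm I3)) /\
  (* (iii) lambda > 1 *)
  (1 < lam ->
     (forall q : R4, is_gmin_S3 G q <->
        ((q0 q = sqrt ((lam + 1) / (2 * lam)) \/ q0 q = - sqrt ((lam + 1) / (2 * lam))) /\
         q1 q ^ 2 + q2 q ^ 2 + q3 q ^ 2 = (lam - 1) / (2 * lam))) /\
     (forall Rm : Mat3, is_gmin_SO3 W Rm <-> (in_SO3 Rm /\ mtrace Rm = 1 + 2 / lam))).
Proof.
  intros D G W.
  destruct (critical_values lam hlam) as (Vplus & Vminus & Vequator & Vmin).
  split; [intros q; exact (critical_points lam q hlam)|].
  do 4 (split; [assumption|]).
  split; [intros q; exact (gmax_S3 lam q hlam)|].
  split; [intros Rm; exact (gmax_SO3 lam Rm hlam)|].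
  split; intros Hl; split.
  - intros q; exact (gmin_S3_small lam q hlam Hl).
  - intros Rm; exact (gmin_SO3_small lam Rm hlam Hl).
  - intros q; exact (gmin_S3_large lam q Hl).
  - intros Rm; exact (gmin_SO3_large lam Rm Hl).
Qed.
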